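(* Let $\mathfrak{g}$ be a finite-dimensional complex nilpotent Lie algebra which is not a pre-Engel-$4$ Lie algebra. Then $\mathfrak{g}$ does not admit a periodic prederivation.
   Context: A Lie algebra $\mathfrak{g}$ is a pre-Engel-$4$ Lie algebra if the linear span of $\{x\in\mathfrak{g}\mid \mathrm{ad}(x)^4=0\}$ equals $\mathfrak{g}$. A linear map $P:\mathfrak{g}\to\mathfrak{g}$ is a prederivation if $P([x,[y,z]])=[P(x),[y,z]]+[x,[P(y),z]]+[x,[y,P(z)]]$ for all $x,y,z\in\mathfrak{g}$; it is periodic if $P^m=\mathrm{id}$ for some integer $m\ge 1$. *)

From HB Require Import structures.
From mathcomp Require Import all_boot all_order all_algebra.
From mathcomp Require Import complex.
From mathcomp Require Import Rstruct.
Set Implicit Arguments. Unset Strict Implicit. Unset Printing Implicit Defensive.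
Import Order.TTheory GRing.Theory Num.Theory.
Local Open Scope ring_scope.

Definition CC : fieldType := complex Rdefinitions.R.

Record is_lie_bracket (K : fieldType) (V : lmodType K) (br : V -> V -> V)
  : Prop := {
  lie_linl : forall (a : K) (x y z : V), br (a *: x + y) z = a *: br x z + br y z;
  lie_linr : forall (a : K) (x y z : V), br x (a *: y + z) = a *: br x y + br x z;
  lie_alt  : forall x : V, br x x = 0;
  lie_jacobi : forall x y z : V,
      br x (br y z) + br y (br z x) + br z (br x y) = 0
}.

Definition ad (K : fieldType) (V : lmodType K) (br : V -> V -> V) (x : V) : V -> V :=
  br x.

(* Nilpotent: some n with ad x_1 o ... o ad x_n = 0 for all x_1,...,x_n,
   i.e. the lower central series reaches 0 (g^{n+1} = 0). *)
Definition lie_nilpotent (K : fieldType) (V : lmodType K) (br : V -> V -> V) : Prop :=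
  exists n : nat, forall (s : seq V) (y : V),
    size s = n -> foldr (fun x acc => br x acc) y s = 0.

Definition ad4_zero (K : fieldType) (V : lmodType K) (br : V -> V -> V) (x : V) : Prop :=
  forall y : V, iter 4 (ad br x) y = 0.

Definition pre_Engel4 (K : fieldType) (V : vectType K) (br : V -> V -> V) : Prop :=
  exists s : seq V, (forall x, x \in s -> ad4_zero br x) /\ (<<s>> = fullv)%VS.

Definition is_prederivation (K : fieldType) (V : lmodType K) (br : V -> V -> V)
  (P : {linear V -> V}) : Prop :=
  forall x y z : V,
    P (br x (br y z)) = br (P x) (br y z) + br x (br (P y) z) + br x (br y (P z)).

Definition periodic (K : fieldType) (V : lmodType K) (P : V -> V) : Prop :=
  exists m : nat, (1 <= m)%N /\ forall x : V, iter m P x = x.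

From HB Require Import structures.
From mathcomp Require Import all_boot all_order all_algebra.
From mathcomp Require Import cyclic separable cyclotomic complex.
From mathcomp Require Import Rstruct.
Set Implicit Arguments. Unset Strict Implicit. Unset Printing Implicit Defensive.
Import Order.TTheory GRing.Theory Num.Theory.
Local Open Scope ring_scope.

(* A periodic operator P over C is diagonalisable with eigenvalues of modulus 1:
   averaging the orbit of v against powers of a primitive m-th root of unity
   splits v into eigenvectors of P.  For a prederivation, if [P x = a x] and
   [P y = b y] then [ad(x)^4 y] is again an eigenvector, of eigenvalue [4a + b];
   since [|4a + b| >= 3], it must vanish.  Hence every eigenvector x satisfies
   [ad(x)^4 = 0], and the eigenvectors span the algebra, i.e. it is
   pre-Engel-4. *)

Lemma closed_field_prim_root_exists (F : closedFieldType) n :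
  (n > 0)%N -> n%:R != 0 :> F -> exists z : F, n.-primitive_root z.
Proof.
move=> n_gt0 n_neq0; pose p : {poly F} := 'X^n - 1.
have [r Dp] := closed_field_poly_normal p.
rewrite (monicP _) ?monicXnsubC // scale1r in Dp.
have r_unity : all n.-unity_root r by apply/allP=> z; rewrite -root_prod_XsubC -Dp.
have size_r : (n < (size r).+1)%N by rewrite -(size_prod_XsubC r id) -Dp size_XnsubC.
have [|z _] := hasP (has_prim_root n_gt0 r_unity _ size_r); last by exists z.
by rewrite -separable_prod_XsubC -Dp separable_Xn_sub_1.
Qed.

Lemma sum_expr_unity_root (R : idomainType) (w : R) n :
  w ^+ n = 1 -> w != 1 -> \sum_(i < n) w ^+ i = 0.
Proof.
move=> wn w_neq1; have : (w - 1) * \sum_(i < n) w ^+ i = 0.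
  by rewrite -subrX1 wn subrr.
by move/eqP; rewrite mulf_eq0 subr_eq0 (negbTE w_neq1) => /eqP.
Qed.

Section PeriodicEigenDecomposition.
Variables (K : fieldType) (V : lmodType K) (P : {linear V -> V}) (m : nat) (z : K).
Hypotheses (Pm : forall v, iter m P v = v) (z_prim : m.-primitive_root z).
Hypothesis m_neq0 : m%:R != 0 :> K.

Definition eigen_proj (k : nat) (v : V) : V :=
  m%:R^-1 *: \sum_(j < m) (z ^+ k) ^+ j *: iter j P v.

Lemma eigen_projP k v : P (eigen_proj k v) = (z ^+ k)^-1 *: eigen_proj k v.
Proof.
have [n def_m] : exists n, m = n.+1 by exists m.-1; rewrite prednK // (prim_order_gt0 z_prim).
have wm : (z ^+ k) ^+ m = 1 by rewrite exprAC (prim_expr_order z_prim) expr1n.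
have w_neq0 : z ^+ k != 0 by move: (oner_neq0 K); rewrite -wm expf_eq0 (prim_order_gt0 z_prim).
suff shift : z ^+ k *: P (eigen_proj k v) = eigen_proj k v.
  by rewrite -{2}shift scalerA mulVf // scale1r.
rewrite /eigen_proj linearZ scalerA mulrC -scalerA linear_sum scaler_sumr.
congr (_ *: _); move: wm Pm; rewrite def_m => wm Pm'.
rewrite big_ord_recr big_ord_recl /= addrC expr0 scale1r; congr (_ + _).
  by rewrite linearZ scalerA -exprS wm scale1r -iterS Pm'.
by apply: eq_bigr => i _; rewrite linearZ scalerA -exprS -iterS.
Qed.

Lemma sum_eigen_proj v : \sum_(k < m) eigen_proj k v = v.
Proof.
have [n def_m] : exists n, m = n.+1 by exists m.-1; rewrite prednK // (prim_order_gt0 z_prim).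
rewrite -scaler_sumr exchange_big /=.
under eq_bigr => j _ do under eq_bigr => k _ do rewrite exprAC.
under eq_bigr => j _ do rewrite -scaler_suml.
move: z_prim m_neq0; rewrite def_m => zp mn0.
rewrite big_ord_recl /= [X in _ + X]big1 ?addr0.
  rewrite expr0 (eq_bigr (fun _ => 1)) => [|i _]; last by rewrite expr1n.
  by rewrite sumr_const card_ord scalerA mulVf // scale1r.
move=> j _; rewrite sum_expr_unity_root ?scale0r //.
  by rewrite exprAC (prim_expr_order zp) expr1n.
rewrite -(expr0 z) (eq_prim_root_expr zp) mod0n modn_small //.
by rewrite /bump /= add1n ltnS ltn_ord.
Qed.

End PeriodicEigenDecomposition.

Section PeriodicEigenvalues.
Variables (K : numFieldType) (V : lmodType K) (P : {linear V -> V}) (m : nat).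
Hypotheses (m_gt0 : (0 < m)%N) (Pm : forall v, iter m P v = v).

Lemma iter_eigenvector u c k : P u = c *: u -> iter k P u = c ^+ k *: u.
Proof.
move=> Pu; elim: k => [|k IHk]; first by rewrite expr0 scale1r.
by rewrite iterS IHk linearZZ Pu scalerA exprSr.
Qed.

Lemma periodic_eigenvalue_norm u c : P u = c *: u -> u = 0 \/ `|c| = 1.
Proof.
move=> Pu; have := Pm u; rewrite (iter_eigenvector _ Pu) => /eqP.
rewrite -subr_eq0 -{2}[u]scale1r -scalerBl scaler_eq0 subr_eq0.
case/orP=> [/eqP cm|/eqP]; [right|by left].
have : `|c| ^+ m = 1 by rewrite -normrX cm normr1.
by move/eqP; rewrite pexpr_eq1 // => /eqP.
Qed.

End PeriodicEigenvalues.

Section LieBracket.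
Variables (K : fieldType) (V : lmodType K) (br : V -> V -> V).
Hypothesis br_lie : is_lie_bracket br.

Lemma brDr x y z : br x (y + z) = br x y + br x z.
Proof. by have := lie_linr br_lie 1 x y z; rewrite !scale1r. Qed.

Lemma br0r x : br x 0 = 0.
Proof. by apply: (@addrI _ (br x 0)); rewrite addr0 -brDr addr0. Qed.

Lemma brZr a x y : br x (a *: y) = a *: br x y.
Proof. by have := lie_linr br_lie a x y 0; rewrite !addr0 br0r addr0. Qed.

Lemma brDl x y z : br (x + y) z = br x z + br y z.
Proof. by have := lie_linl br_lie 1 x y z; rewrite !scale1r. Qed.

Lemma br0l x : br 0 x = 0.
Proof. by apply: (@addrI _ (br 0 x)); rewrite addr0 -brDl addr0. Qed.

Lemma brZl a x y : br (a *: x) y = a *: br x y.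
Proof. by have := lie_linl br_lie a x 0 y; rewrite !addr0 br0l addr0. Qed.

Lemma iter_ad_sum n x (I : Type) (r : seq I) (f : I -> V) :
  iter n (ad br x) (\sum_(i <- r) f i) = \sum_(i <- r) iter n (ad br x) (f i).
Proof.
elim: n => [|n IHn] /=; first by [].
rewrite IHn {IHn} /ad; elim: r => [|i r IHr]; first by rewrite !big_nil br0r.
by rewrite !big_cons brDr IHr.
Qed.

Lemma prederivation_eigen_brbr (P : {linear V -> V}) x y a b :
  is_prederivation br P -> P x = a *: x -> P y = b *: y ->
  P (br x (br x y)) = (a *+ 2 + b) *: br x (br x y).
Proof.
by move=> P_pre Px Py; rewrite P_pre Px Py brZl !brZr brZl brZr -!scalerDl.
Qed.

End LieBracket.

Lemma periodic_prederivation_ad4_eigen (K : numFieldType) (V : lmodType K)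
    (br : V -> V -> V) (P : {linear V -> V}) m x y a b :
  is_lie_bracket br -> is_prederivation br P ->
  (0 < m)%N -> (forall v, iter m P v = v) ->
  P x = a *: x -> P y = b *: y -> iter 4 (ad br x) y = 0.
Proof.
move=> br_lie P_pre m_gt0 Pm Px Py; rewrite /ad /=.
have P_ad4 := prederivation_eigen_brbr br_lie P_pre Px
  (prederivation_eigen_brbr br_lie P_pre Px Py).
have [->|a1] := periodic_eigenvalue_norm m_gt0 Pm Px; first by rewrite br0l.
have [->|b1] := periodic_eigenvalue_norm m_gt0 Pm Py; first by rewrite !br0r.
have [//|c1] := periodic_eigenvalue_norm m_gt0 Pm P_ad4; exfalso.
move: c1; rewrite addrA -mulrnDr => c1.
have : `|a *+ 4| <= `|a *+ 4 + b| + `|b|.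
  by have := ler_normB (a *+ 4 + b) b; rewrite addrK.
by rewrite normrMn a1 c1 b1 -(natrD _ 1 1) ler_nat.
Qed.

Theorem proposition5p11 (V : vectType CC) (br : V -> V -> V) :
  is_lie_bracket br -> lie_nilpotent br -> ~ pre_Engel4 br ->
  ~ (exists P : {linear V -> V}, is_prederivation br P /\ periodic P).
Proof.
move=> br_lie _ not_pre_Engel [P [P_pre [m [m_gt0 Pm]]]]; apply: not_pre_Engel.
have m_neq0 : m%:R != 0 :> CC by rewrite pnatr_eq0 -lt0n.
have [z z_prim] := closed_field_prim_root_exists m_gt0 m_neq0.
pose F (v : V) (k : 'I_m) := eigen_proj P m z k v.
have F_eigen v k : P (F v k) = (z ^+ k)^-1 *: F v k := eigen_projP Pm z_prim k v.
have sum_F v : \sum_(k < m) F v k = v := sum_eigen_proj P z_prim m_neq0 v.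
exists [seq F v k | v <- vbasis fullv, k <- enum 'I_m]; split.
  move=> _ /allpairsP [[v k] [_ _ ->]] y.
  rewrite -[y]sum_F (iter_ad_sum br_lie) big1 // => j _.
  exact: periodic_prederivation_ad4_eigen br_lie P_pre m_gt0 Pm (F_eigen v k) (F_eigen y j).
apply/eqP; rewrite eqEsubv subvf /= -{1}(span_basis (vbasisP fullv)).
apply/span_subvP => v v_basis; rewrite -(sum_F v); apply: rpred_sum => k _.
by apply: memv_span; apply/allpairsP; exists (v, k); rewrite mem_enum.
Qed.
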